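(* Let $(H;\langle\cdot,\cdot\rangle)$ be an inner product space over $\mathbb{K}\in\{\mathbb{R},\mathbb{C}\}$, and let $\{e_i\}_{i\in I}$ and $\{f_j\}_{j\in J}$ be two finite orthonormal families of vectors in $H$. Then for any $x,y\in H\setminus\{0\}$, $$\left|\sum_{i\in I}\langle x,e_i\rangle\langle e_i,y\rangle+\sum_{j\in J}\langle x,f_j\rangle\langle f_j,y\rangle-2\sum_{i\in I,\,j\in J}\langle x,e_i\rangle\langle f_j,y\rangle\langle e_i,f_j\rangle-\frac12\langle x,y\rangle\right|\le\frac12\|x\|\,\|y\|.$$ Equality holds if and only if there exists $\lambda\in\mathbb{K}$ such that $$x-\lambda y=2\left(\sum_{i\in I}\langle x,e_i\rangle e_i-\lambda\sum_{j\in J}\langle y,f_j\rangle f_j\right).$$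
   Context: The inner product is linear in the first argument and conjugate-linear in the second; $\|x\|=\langle x,x\rangle^{1/2}$. A family $\{e_i\}_{i\in I}$ is orthonormal if $\langle e_i,e_j\rangle=1$ for $i=j$ and $0$ for $i\neq j$. *)

From HB Require Import structures.
From mathcomp Require Import all_boot all_order all_algebra.
From mathcomp Require Import complex.
From mathcomp Require Import reals.
Set Implicit Arguments. Unset Strict Implicit. Unset Printing Implicit Defensive.
Import Order.TTheory GRing.Theory Num.Theory.
Local Open Scope ring_scope.

Definition is_inner_product (K : numFieldType) (conj : K -> K)
    (V : lmodType K) (ip : V -> V -> K) : Prop :=
  [/\ (forall (a : K) (x y z : V), ip (a *: x + y) z = a * ip x z + ip y z),
      (forall x y : V, ip x y = conj (ip y x)),
      (forall x : V, 0 <= ip x x) &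
      (forall x : V, ip x x = 0 -> x = 0)].

Definition orthonormal (K : numFieldType) (V : lmodType K) (ip : V -> V -> K)
    (I : finType) (e : I -> V) : Prop :=
  forall i j : I, ip (e i) (e j) = (i == j)%:R.

Definition thm21_over (K : numFieldType) (conj : K -> K) (sqrtK : K -> K) : Prop :=
  forall (V : lmodType K) (ip : V -> V -> K),
  is_inner_product conj ip ->
  forall (I J : finType) (e : I -> V) (f : J -> V),
  orthonormal ip e -> orthonormal ip f ->
  forall x y : V, x != 0 -> y != 0 ->
  let nrm := fun v : V => sqrtK (ip v v) in
  let S := \sum_(i : I) ip x (e i) * ip (e i) y
         + \sum_(j : J) ip x (f j) * ip (f j) y
         - 2 * (\sum_(i : I) \sum_(j : J) ip x (e i) * ip (f j) y * ip (e i) (f j))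
         - 2^-1 * ip x y in
  `|S| <= 2^-1 * (nrm x * nrm y) /\
  (`|S| = 2^-1 * (nrm x * nrm y) <->
   exists lam : K,
     x - lam *: y = 2 *: (\sum_(i : I) ip x (e i) *: e i
                          - lam *: \sum_(j : J) ip y (f j) *: f j)).

From Pilot Require Import Defs.
From HB Require Import structures.
From mathcomp Require Import all_boot all_order all_algebra.
From mathcomp Require Import complex.
From mathcomp Require Import reals.
From mathcomp Require Import ring.
Set Implicit Arguments. Unset Strict Implicit. Unset Printing Implicit Defensive.
Import Order.TTheory GRing.Theory Num.Theory.
Local Open Scope ring_scope.

(* Let P and Q be the orthogonal projections onto the spans of the e_i and of
   the f_j. The reflections u = 2Px - x and v = 2Qy - y preserve norms, and
   expanding <u, v> shows that the quantity inside the absolute value is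
   exactly -<u, v>/2. The inequality is therefore Cauchy-Schwarz for u and v,
   and equality holds iff u = lam v, which rearranges to the stated
   condition. *)

Lemma refl_eq_scale (K : pzRingType) (V : lmodType K) (P Q x y : V) (lam : K) :
  (2 *: P - x == lam *: (2 *: Q - y)) = (x - lam *: y == 2 *: (P - lam *: Q)).
Proof.
rewrite -subr_eq0 -[RHS]subr_eq0 -[RHS]eqr_opp oppr0 opprB.
rewrite !scalerBr !scaler_nat -scalerMnr; congr (_ == 0).
rewrite !opprD !opprK !addrA; congr (_ + _).
by rewrite [RHS]addrAC (addrAC (P *+ 2) (- (lam *: Q))).
Qed.

Section InnerProduct.
Variables (K : numFieldType) (conj : {rmorphism K -> K}).
Hypothesis normK : forall a : K, `|a| ^+ 2 = a * conj a.
Variables (V : lmodType K) (ip : V -> V -> K).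
Hypothesis hip : is_inner_product conj ip.

Lemma ip_conj x y : ip x y = conj (ip y x). Proof. by case: hip. Qed.
Lemma ipxx_ge0 x : 0 <= ip x x. Proof. by case: hip. Qed.
Lemma ipxx_eq0 x : ip x x = 0 -> x = 0. Proof. by case: hip => _ _ _; apply. Qed.

Lemma ipDl x y z : ip (x + y) z = ip x z + ip y z.
Proof. by case: hip => ipZDl _ _ _; rewrite -{1}[x]scale1r ipZDl mul1r. Qed.

Lemma ip0l z : ip 0 z = 0.
Proof. by apply: (addIr (ip 0 z)); rewrite -ipDl !add0r. Qed.

Lemma ipZl a x z : ip (a *: x) z = a * ip x z.
Proof.
by case: hip => ipZDl _ _ _; rewrite -[a *: x]addr0 ipZDl ip0l addr0.
Qed.

Lemma ipBl x y z : ip (x - y) z = ip x z - ip y z.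
Proof. by apply: (addIr (ip y z)); rewrite -ipDl !subrK. Qed.

Lemma ipDr x y z : ip z (x + y) = ip z x + ip z y.
Proof. by rewrite ip_conj ipDl rmorphD -!ip_conj. Qed.

Lemma ipZr a x z : ip z (a *: x) = conj a * ip z x.
Proof. by rewrite ip_conj ipZl rmorphM -ip_conj. Qed.

Lemma ipBr x y z : ip z (x - y) = ip z x - ip z y.
Proof. by apply: (addIr (ip z y)); rewrite -ipDr !subrK. Qed.

Lemma ip_suml (I : finType) (a : I -> K) (g : I -> V) z :
  ip (\sum_i a i *: g i) z = \sum_i a i * ip (g i) z.
Proof.
rewrite (big_morph (ip^~ z) (fun x y => ipDl x y z) (ip0l z)).
by apply: eq_bigr => i _; rewrite ipZl.
Qed.

Lemma ip_sumr (I : finType) (a : I -> K) (g : I -> V) z :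
  ip z (\sum_i a i *: g i) = \sum_i conj (a i) * ip z (g i).
Proof.
rewrite ip_conj ip_suml rmorph_sum.
by apply: eq_bigr => i _; rewrite rmorphM -ip_conj.
Qed.

Lemma ipxx_gt0 v : v != 0 -> 0 < ip v v.
Proof.
by move=> v0; rewrite lt_def ipxx_ge0 andbT; apply: contra v0 => /eqP /ipxx_eq0 ->.
Qed.

Lemma ip_sub_line_proj u v : v != 0 ->
  ip (u - (ip u v / ip v v) *: v) (u - (ip u v / ip v v) *: v)
  = ip u u - `|ip u v| ^+ 2 / ip v v.
Proof.
move=> v0; have vv0 := lt0r_neq0 (ipxx_gt0 v0).
have conj_vv : conj (ip v v) = ip v v by rewrite -ip_conj.
rewrite !(ipBl, ipBr, ipZl, ipZr) rmorphM fmorphV conj_vv [ip v u]ip_conj normK.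
by field.
Qed.

Lemma cauchy_schwarz u v : `|ip u v| ^+ 2 <= ip u u * ip v v.
Proof.
have [-> | v0] := eqVneq v 0.
  by rewrite ip_conj !ip0l rmorph0 normr0 expr0n mulr0.
have vv_gt0 := ipxx_gt0 v0.
rewrite -subr_ge0 -[`|ip u v| ^+ 2](divfK (lt0r_neq0 vv_gt0)) -mulrBl.
by rewrite -ip_sub_line_proj ?mulr_ge0 ?ipxx_ge0 ?ltW.
Qed.

Lemma cauchy_schwarz_eq u v : v != 0 ->
  `|ip u v| ^+ 2 = ip u u * ip v v <-> exists lam, u = lam *: v.
Proof.
move=> v0; have vv0 := lt0r_neq0 (ipxx_gt0 v0).
pose w := u - (ip u v / ip v v) *: v.
have eq_w0 : `|ip u v| ^+ 2 = ip u u * ip v v <-> ip w w = 0.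
  rewrite ip_sub_line_proj //; split => [-> | /eqP].
    by rewrite mulfK ?subrr.
  by rewrite subr_eq0 => /eqP ->; rewrite divfK.
apply: (iff_trans eq_w0); split => [/ipxx_eq0/eqP | [lam u_eq]].
  by rewrite subr_eq0 => /eqP ->; eexists.
by rewrite /w u_eq ipZl mulfK // subrr ip0l.
Qed.

Definition oproj (I : finType) (e : I -> V) x := \sum_i ip x (e i) *: e i.
Definition orefl (I : finType) (e : I -> V) x := 2 *: oproj e x - x.

Lemma ip_orefl_expand (I J : finType) (e : I -> V) (f : J -> V) x y :
  ip (orefl e x) (orefl f y) =
    4 * (\sum_i \sum_j ip x (e i) * ip (f j) y * ip (e i) (f j))
    - 2 * (\sum_i ip x (e i) * ip (e i) y)
    - 2 * (\sum_j ip x (f j) * ip (f j) y) + ip x y.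
Proof.
have -> : \sum_i ip x (e i) * ip (e i) y = ip (oproj e x) y by rewrite ip_suml.
have -> : \sum_j ip x (f j) * ip (f j) y = ip x (oproj f y).
  by rewrite ip_sumr; apply: eq_bigr => j _; rewrite -ip_conj mulrC.
have -> : \sum_i \sum_j ip x (e i) * ip (f j) y * ip (e i) (f j)
          = ip (oproj e x) (oproj f y).
  rewrite ip_suml; apply: eq_bigr => i _; rewrite ip_sumr mulr_sumr.
  by apply: eq_bigr => j _; rewrite -ip_conj mulrA.
by rewrite /orefl !(ipBl, ipBr, ipZl, ipZr) rmorph_nat; ring.
Qed.

Section Orthonormal.
Variables (I : finType) (e : I -> V).
Hypothesis e_on : Defs.orthonormal ip e.

Lemma ip_oproj_vec x k : ip (oproj e x) (e k) = ip x (e k).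
Proof.
rewrite ip_suml (bigD1 k) //= e_on eqxx mulr1 big1 ?addr0 // => i /negbTE ik.
by rewrite e_on ik mulr0.
Qed.

Lemma ip_orefl x : ip (orefl e x) (orefl e x) = ip x x.
Proof.
have PP : ip (oproj e x) (oproj e x) = ip x (oproj e x).
  rewrite {2}/oproj ip_sumr [RHS]ip_sumr.
  by apply: eq_bigr => i _; rewrite ip_oproj_vec.
have Px : ip (oproj e x) x = ip x (oproj e x) by rewrite ip_conj -PP -ip_conj.
by rewrite /orefl !(ipBl, ipBr, ipZl, ipZr) rmorph_nat PP Px; ring.
Qed.

End Orthonormal.
End InnerProduct.

Section Theorem21.
Variables (K : numFieldType) (conj : {rmorphism K -> K}).
Hypothesis normK : forall a : K, `|a| ^+ 2 = a * conj a.
Variable sq : K -> K.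
Hypothesis sq_ge0 : forall a, 0 <= a -> 0 <= sq a.
Hypothesis sqK : forall a, 0 <= a -> sq a ^+ 2 = a.

Lemma ler_sq_mul a b c : 0 <= a -> 0 <= b -> 0 <= c ->
  (c <= sq a * sq b) = (c ^+ 2 <= a * b).
Proof.
move=> a0 b0 c0.
have ab0 : 0 <= sq a * sq b by rewrite mulr_ge0 ?sq_ge0.
by rewrite -[LHS](ler_pXn2r (_ : 0 < 2)%N) ?nnegrE // exprMn !sqK.
Qed.

Lemma eq_sq_mul a b c : 0 <= a -> 0 <= b -> 0 <= c ->
  (c == sq a * sq b) = (c ^+ 2 == a * b).
Proof.
move=> a0 b0 c0.
have ab0 : 0 <= sq a * sq b by rewrite mulr_ge0 ?sq_ge0.
by rewrite -[LHS](eqrXn2 (_ : 0 < 2)%N) // exprMn !sqK.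
Qed.

Lemma thm21_general : thm21_over conj sq.
Proof.
(* Only [orefl ip f y] must be nonzero, for the equality case of
   Cauchy-Schwarz. *)
move=> V ip hip I J e f e_on f_on x y _ y0 nrm S.
set u := orefl ip e x; set v := orefl ip f y.
have -> : S = - 2^-1 * ip u v by rewrite /S /u /v (ip_orefl_expand hip); field.
have v0 : v != 0.
  apply: contraNneq y0 => v0; apply/eqP/(ipxx_eq0 hip).
  by rewrite -(ip_orefl hip f_on) -/v v0 (ip0l hip).
have uu : ip u u = ip x x := ip_orefl hip e_on x.
have vv : ip v v = ip y y := ip_orefl hip f_on y.
have half_gt0 : 0 < 2^-1 :> K by rewrite invr_gt0 ltr0n.
rewrite /nrm normrM normrN (gtr0_norm half_gt0).
split.
  rewrite ler_pM2l // ler_sq_mul ?(ipxx_ge0 hip) // -uu -vv.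
  exact: cauchy_schwarz.
apply: (@iff_trans _ (`|ip u v| ^+ 2 = ip u u * ip v v)).
  rewrite uu vv; split => [/(mulfI (lt0r_neq0 half_gt0))/eqP | /eqP].
    by rewrite eq_sq_mul ?normr_ge0 ?(ipxx_ge0 hip) // => /eqP.
  by rewrite -eq_sq_mul ?normr_ge0 ?(ipxx_ge0 hip) // => /eqP ->.
apply: (iff_trans (cauchy_schwarz_eq normK hip _ v0)).
split => -[lam /eqP].
  by rewrite /u /v /orefl refl_eq_scale => /eqP; exists lam.
by rewrite -refl_eq_scale => /eqP; exists lam.
Qed.

End Theorem21.

Theorem theorem2p1 (R : realType) :
  thm21_over (fun a : R => a) (@Num.sqrt R) /\
  thm21_over (@conjc R) (@sqrtc R).
Proof.
split.
  apply: (@thm21_general _ idfun) => [a | a _ | a a_ge0].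
  - by rewrite real_normK ?num_real.
  - exact: sqrtr_ge0.
  - exact: sqr_sqrtr.
apply: thm21_general => [a | a a_ge0 | a _].
- exact: sqr_normc.
- by rewrite sqrtc_ge0.
- exact: sqr_sqrtc.
Qed.
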